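(* Let $T_1,T_2$ be two trees. Every minimum and minimal isometric-universal graph for $\{T_1,T_2\}$ is a tree.
   Context: Graphs are finite, simple and undirected. $\mathrm{dist}_G(u,v)$ denotes the number of edges of a shortest $u$–$v$ path in $G$ ($\infty$ if none exists). A subgraph $H$ of $G$ is an isometric subgraph if $\mathrm{dist}_H(u,v)=\mathrm{dist}_G(u,v)$ for all vertices $u,v$ of $H$. A graph $\mathcal U$ is an isometric-universal graph for a family $\mathcal F$ of graphs if every graph of $\mathcal F$ is isomorphic to an isometric subgraph of $\mathcal U$. It is minimum if it has the smallest possible number of vertices among all isometric-universal graphs for $\mathcal F$, and it is minimal if no proper subgraph of $\mathcal U$ is an isometric-universal graph for $\mathcal F$. *)

From mathcomp Require Import all_boot.
Set Implicit Arguments. Unset Strict Implicit. Unset Printing Implicit Defensive.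

Record graph := Graph { vert : finType; adj : rel vert }.
Arguments adj : clear implicits.

Definition simple (G : graph) : Prop :=
  symmetric (adj G) /\ irreflexive (adj G).

Definition walk (T : finType) (e : rel T) (u v : T) (n : nat) : Prop :=
  exists p : seq T, [&& path e u p, last u p == v & size p == n].

(* is_dist e u v d : the distance from u to v is d (None = infinity). *)
Definition is_dist (T : finType) (e : rel T) (u v : T) (d : option nat) : Prop :=
  match d with
  | Some n => walk e u v n /\ (forall m, walk e u v m -> n <= m)
  | None => forall m, ~ walk e u v m
  end.

Definition subgraph (G : graph) (S : {set vert G}) (E : rel (vert G)) : graph :=
  @Graph {x : vert G | x \in S}
    (fun x y => E (val x) (val y) && adj G (val x) (val y)).

Definition proper_sub (G : graph) (S : {set vert G}) (E : rel (vert G)) : Prop :=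
  S != setT \/ exists x y, adj G x y && ~~ E x y.

Definition isometric_sub (H G : graph) : Prop :=
  exists (S : {set vert G}) (E : rel (vert G)),
    simple (subgraph S E) /\
    (exists f : vert H -> vert (subgraph S E), bijective f /\
        forall x y, adj H x y = adj (subgraph S E) (f x) (f y)) /\
    (forall (x y : vert (subgraph S E)) (d : option nat),
        is_dist (adj (subgraph S E)) x y d <-> is_dist (adj G) (val x) (val y) d).

Definition iso_universal2 (T1 T2 U : graph) : Prop :=
  isometric_sub T1 U /\ isometric_sub T2 U.

Definition minimum_universal2 (T1 T2 U : graph) : Prop :=
  iso_universal2 T1 T2 U /\
  forall W : graph, simple W -> iso_universal2 T1 T2 W -> #|vert U| <= #|vert W|.

Definition minimal_universal2 (T1 T2 U : graph) : Prop :=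
  iso_universal2 T1 T2 U /\
  forall (S : {set vert U}) (E : rel (vert U)),
    simple (subgraph S E) -> proper_sub S E -> ~ iso_universal2 T1 T2 (subgraph S E).

Definition connected (G : graph) : Prop :=
  forall u v : vert G, exists n, walk (adj G) u v n.

Definition acyclic (G : graph) : Prop :=
  forall c : seq (vert G), uniq c -> 3 <= size c -> ~~ cycle (adj G) c.

Definition tree (G : graph) : Prop :=
  simple G /\ 0 < #|vert G| /\ connected G /\ acyclic G.

From Pilot Require Import Defs.
From mathcomp Require Import all_boot zify.
Set Implicit Arguments. Unset Strict Implicit. Unset Printing Implicit Defensive.

(* Fix isometric embeddings [g1], [g2] of [T1], [T2] into [U], with images [A] and [B].
   Minimality forces every vertex of [U] into [A] or [B] and every edge inside [A] or
   inside [B].  The pullback [J] of [A :&: B] to [T2] carries a partial isometry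
   [h : J -> T1], and gluing [T1] to [T2] along any partial isometry with domain [D]
   gives a universal graph on [#|T1| + #|T2| - #|D|] vertices, so minimumness makes [J]
   a largest such domain.  Hence [J] is nonempty, which connects [U].  It is also
   geodesically convex: in a tree the distances from the first step of the geodesic
   from [u] to [w] are determined by the distances from [u] and [w], so that step could
   be added to [J].  A cycle of [U] lies neither in [A] nor in [B], so it contains a path
   from [u] to [z] in [A :&: B] through [B] outside [A] that avoids [u]; in [T2] its
   first step is the step from [u] toward [z], which lies outside [J]. *)

Section Walks.
Variables (T : finType) (e : rel T).

Lemma walk0 x y : walk e x y 0 <-> x = y.
Proof.
split; first by case=> [[|? ?]] // /and3P [_ /eqP].
by move=> ->; exists [::]; rewrite /= eqxx.
Qed.

Lemma path_walk x q : path e x q -> walk e x (last x q) (size q).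
Proof. by move=> pq; exists q; rewrite pq !eqxx. Qed.

Lemma walk_edge x y : e x y -> walk e x y 1.
Proof. by move=> xy; exists [:: y]; rewrite /= xy eqxx. Qed.

Lemma walk_cat x y z m n : walk e x y m -> walk e y z n -> walk e x z (m + n).
Proof.
case=> p /and3P [pp /eqP <- /eqP <-] [q /and3P [pq /eqP <- /eqP <-]].
by exists (p ++ q); rewrite cat_path last_cat size_cat pp pq !eqxx.
Qed.

Lemma walkS x z n : walk e x z n.+1 -> exists2 y, e x y & walk e y z n.
Proof.
case=> [[|y p]] /and3P [pp lz sz] //; move: pp => /= /andP [xy py].
by exists y => //; exists p; rewrite py lz -eqSS sz.
Qed.

Lemma walk1 x y : walk e x y 1 -> e x y.
Proof. by case/walkS=> z xz /walk0 <-. Qed.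

Lemma walkSr x z n : walk e x z n.+1 -> exists2 y, walk e x y n & e y z.
Proof.
case=> p /and3P [pp /eqP lz /eqP sz].
case/lastP: p pp lz sz => [|p y] // pp; rewrite last_rcons size_rcons => <- [sz].
move: pp; rewrite rcons_path => /andP [pp ly].
by exists (last x p) => //; rewrite -sz; apply: path_walk.
Qed.

Lemma walk_rev x y n : symmetric e -> walk e x y n -> walk e y x n.
Proof.
move=> e_sym; elim: n x y => [|n IH] x y; first by move/walk0 => ->; apply/walk0.
case/walkS=> z xz /IH zy; rewrite -addn1; apply: walk_cat zy (walk_edge _).
by rewrite e_sym.
Qed.

Lemma walk_shorten x y n : walk e x y n ->
  exists q, [/\ path e x q, last x q = y, uniq (x :: q), size q <= n & size q < #|T|].
Proof.
case=> p /and3P [pp /eqP <- /eqP <-]; case: (shortenP pp) => q pq uq sub_qp.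
exists q; split=> //; first by apply: uniq_leq_size sub_qp; case/andP: uq.
by move: (max_card (mem (x :: q))); move/card_uniqP: uq => ->.
Qed.

Lemma walk_map (T' : finType) (e' : rel T') (f : T -> T') x y n :
  {homo f : a b / e a b >-> e' a b} -> walk e x y n -> walk e' (f x) (f y) n.
Proof.
move=> f_homo [p /and3P [pp /eqP <- /eqP <-]].
by exists (map f p); rewrite path_map (sub_path _ pp) // last_map size_map !eqxx.
Qed.

Definition walkb x y n := [exists p : n.-tuple T, path e x p && (last x p == y)].

Lemma walkbP x y n : reflect (walk e x y n) (walkb x y n).
Proof.
apply: (iffP existsP) => [[p /andP [pp ly]]|[p /and3P [pp ly sp]]].
  by exists p; rewrite pp ly size_tuple eqxx.
by exists (Tuple sp); rewrite /= pp ly.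
Qed.

Lemma dist_ex x y : exists n, walkb x y n || (#|T| <= n).
Proof. by exists #|T|; rewrite leqnn orbT. Qed.

(* The length of a shortest walk; the junk value [#|T|] when there is none. *)
Definition dist x y := ex_minn (dist_ex x y).

Lemma dist_min x y n : walk e x y n -> dist x y <= n.
Proof.
case/walk_shorten=> q [pq <- _ sq _]; rewrite /dist; case: ex_minnP => m _ m_min.
by apply: leq_trans sq; apply/m_min/orP; left; apply/walkbP/path_walk.
Qed.

Lemma dist_walk x y n : walk e x y n -> walk e x y (dist x y).
Proof.
case/walk_shorten=> q [pq <- _ _ sq]; rewrite /dist; case: ex_minnP => m.
case/orP=> [/walkbP //| Tm] /(_ (size q)).
rewrite (introT (walkbP _ _ _) (path_walk pq)) => /(_ isT) /(leq_trans Tm).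
by rewrite leqNgt sq.
Qed.

Lemma distxx x : dist x x = 0.
Proof. by apply/eqP; rewrite -leqn0; apply/dist_min/walk0. Qed.

Lemma mem_path_dist x q u : path e x q -> u \in q -> dist u (last x q) < size q.
Proof.
move=> pq uq; case/splitPr: uq pq => p1 p2.
rewrite cat_path last_cat size_cat /= => /and3P [_ _ pp2].
by rewrite addnS ltnS (leq_trans (dist_min (path_walk pp2))) ?leq_addl.
Qed.

Definition avoiding u : rel T := fun a b => [&& a != u, b != u & e a b].

Lemma avoiding_sym u : symmetric e -> symmetric (avoiding u).
Proof. by move=> e_sym a b; rewrite /avoiding e_sym andbCA. Qed.

Lemma path_avoiding u x q : path e x q -> x != u -> u \notin q -> path (avoiding u) x q.
Proof.
elim: q x => //= a q IH x /andP [xa pq] xu; rewrite inE negb_or => /andP [ua uq].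
by rewrite /avoiding xu eq_sym ua xa IH // eq_sym.
Qed.

Lemma notin_path_avoiding u x q : path (avoiding u) x q -> u \notin q.
Proof.
elim: q x => //= a q IH x /andP [/and3P [_ au _] pq].
by rewrite inE negb_or eq_sym au (IH _ pq).
Qed.

End Walks.

Section TreeParts.
Variable G : graph.
Hypothesis tG : tree G.

Lemma tree_sym : symmetric (adj G). Proof. by case: tG => [[]]. Qed.
Lemma tree_irr : irreflexive (adj G). Proof. by case: tG => [[]]. Qed.
Lemma tree_connected : connected G. Proof. by case: tG => _ [_ []]. Qed.
Lemma tree_acyclic : acyclic G. Proof. by case: tG => _ [_ []]. Qed.

End TreeParts.

Section TreeDist.
Variable G : graph.
Hypothesis tG : tree G.
Local Notation e := (adj G).
Local Notation d := (dist (adj G)).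
Local Notation e_sym := (tree_sym tG).
Local Notation e_irr := (tree_irr tG).

Lemma walk_dist x y : walk e x y (d x y).
Proof. by case: (tree_connected tG x y) => n; apply: dist_walk. Qed.

Lemma dist_sym x y : d x y = d y x.
Proof.
by apply/eqP; rewrite eqn_leq !dist_min //; apply: (walk_rev e_sym (walk_dist _ _)).
Qed.

Lemma dist_tri x y z : d x z <= d x y + d y z.
Proof. by apply/dist_min/walk_cat; apply: walk_dist. Qed.

Lemma dist_eq0 x y : d x y = 0 -> x = y.
Proof. by move=> dxy; have := walk_dist x y; rewrite dxy => /walk0. Qed.

Lemma dist_adj x y : e x y -> d x y = 1.
Proof.
move=> xy; apply/eqP; rewrite eqn_leq lt0n dist_min /=; last exact: walk_edge.
by apply: contraTneq xy => /dist_eq0 ->; rewrite e_irr.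
Qed.

Lemma dist1_adj x y : d x y = 1 -> e x y.
Proof. by move=> dxy; have := walk_dist x y; rewrite dxy => /walk1. Qed.

Lemma dist_adj_le x y z : e x y -> d x z <= (d y z).+1.
Proof. by move=> xy; apply: leq_trans (dist_tri x y z) _; rewrite dist_adj. Qed.

Lemma step_toward x z : x != z -> exists2 p, e x p & (d p z).+1 = d x z.
Proof.
move=> xz; have := walk_dist x z; case dxz: (d x z) => [|n].
  by move/dist_eq0: dxz xz => ->; rewrite eqxx.
case/walkS=> p xp pz; exists p => //; apply/eqP; rewrite eqn_leq ltnS dist_min //=.
by rewrite -dxz dist_adj_le.
Qed.

Lemma geodesic_avoiding u x z : x != u -> d x z <= d u z ->
  walk (avoiding e u) x z (d x z).
Proof.
move=> xu le_xu; case: (walk_dist x z) => q /and3P [pq /eqP lq /eqP sq].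
rewrite -sq -lq; apply/path_walk/path_avoiding => //; apply/negP.
by move/(mem_path_dist pq); rewrite lq sq ltnNge le_xu.
Qed.

(* A second connection between two neighbours of [u] would close a cycle through [u]. *)
Lemma no_walk_avoiding u p s n : e u p -> e u s -> p != s -> ~ walk (avoiding e u) p s n.
Proof.
move=> up us ps /walk_shorten [[|a q] [pq lq uq _ _]]; first by rewrite -lq eqxx in ps.
have pu : p != u by case/andP: pq => /and3P [].
have uq' : u \notin a :: q := notin_path_avoiding pq.
have uc : uniq [:: u, p, a & q] by rewrite cons_uniq uq andbT inE negb_or eq_sym pu.
case/negP: (tree_acyclic tG uc isT).
rewrite /cycle rcons_path /= up; move: pq lq => /= /andP [/and3P [_ _ ->] pq] ->.
by rewrite e_sym us andbT; apply: sub_path pq => ? ? /and3P [].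
Qed.

Lemma step_toward_avoiding u y w n : e u y -> u != w -> walk (avoiding e u) y w n ->
  (d y w).+1 = d u w.
Proof.
move=> uy uw yw; have [p up pw] := step_toward uw.
case: (eqVneq p y) => [<- // | py].
have pu : p != u by apply: contraTneq up => ->; rewrite e_irr.
have /(geodesic_avoiding pu) pw' : d p w <= d u w by rewrite -pw.
by case: (no_walk_avoiding up uy py (walk_cat pw' (walk_rev (avoiding_sym u e_sym) yw))).
Qed.

Lemma dist_away u p s z : e u p -> e u s -> p != s -> (d p z).+1 = d u z ->
  d s z = (d u z).+1.
Proof.
move=> up us ps pz; have [lt_us | le_su] := ltnP (d u z) (d s z).
  by apply/eqP; rewrite eqn_leq lt_us andbT dist_adj_le // e_sym.
have pu : p != u by apply: contraTneq up => ->; rewrite e_irr.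
have su : s != u by apply: contraTneq us => ->; rewrite e_irr.
have /(geodesic_avoiding pu) pz' : d p z <= d u z by rewrite -pz.
have sz := geodesic_avoiding su le_su.
by case: (no_walk_avoiding up us ps (walk_cat pz' (walk_rev (avoiding_sym u e_sym) sz))).
Qed.

Lemma dist_across u p s w c : e u p -> (d p w).+1 = d u w -> e u s ->
  (d s c).+1 = d u c -> p != s -> d w c = d u w + d u c.
Proof.
move Duw: (d u w) => n; elim: n u p s Duw => [|n IH] u p s Duw up pw // us sc ps.
have pc : d p c = (d u c).+1 by apply: (dist_away us up); rewrite // eq_sym.
have [p_w | pw_neq] := eqVneq p w; first by rewrite -Duw -p_w pc (dist_adj up).
have [p' pp' p'w] := step_toward pw_neq.
have p'u : p' != u by apply/eqP => p'_u; move: p'w pw; rewrite p'_u; lia.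
have Dpw : d p w = n by case: pw.
have p'w' : (d p' w).+1 = n by rewrite p'w.
have uc : (d u c).+1 = d p c by rewrite pc.
by rewrite (IH p p' u Dpw pp' p'w' _ uc p'u) ?pc ?addnS // e_sym.
Qed.

(* The step [p] from [u] toward [w] also approaches [c] unless [u] lies on the
   geodesic from [w] to [c]; parity rules out [d w c + 1 = d u w + d u c]. *)
Lemma dist_step_toward u p w c : e u p -> (d p w).+1 = d u w ->
  d p c = if d w c + 2 <= d u w + d u c then (d u c).-1 else (d u c).+1.
Proof.
move=> up pw; have [<- | uc] := eqVneq u c.
  by rewrite distxx addn0 (dist_sym p) (dist_adj up) ifN // (dist_sym w) -ltnNge addn2.
have [s us sc] := step_toward uc.
case: (eqVneq p s) sc => [<- | ps] sc.
  by rewrite ifT -sc //; have := dist_tri w p c; rewrite (dist_sym w p); lia.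
by rewrite (dist_away us up) 1?eq_sym // ifN // (dist_across up pw us sc ps); lia.
Qed.

End TreeDist.

Definition isometric_emb (H G : graph) (g : vert H -> vert G) :=
  [/\ injective g, forall x y, adj H x y = adj G (g x) (g y) &
      forall x y n, walk (adj G) (g x) (g y) n -> exists2 m, m <= n & walk (adj H) x y m].

Section Embedding.
Variables (H G : graph) (g : vert H -> vert G).
Hypothesis gI : isometric_emb g.

Lemma emb_walk x y n : walk (adj H) x y n -> walk (adj G) (g x) (g y) n.
Proof. by case: gI => _ g_adj _; apply: walk_map => a b; rewrite g_adj. Qed.

Lemma emb_cycle s : cycle (adj G) (map g s) = cycle (adj H) s.
Proof.
by case: gI => _ g_adj _; rewrite cycle_map; apply: eq_cycle => a b; rewrite /= g_adj.
Qed.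

Lemma emb_path x s : path (adj G) (g x) (map g s) = path (adj H) x s.
Proof.
by case: gI => _ g_adj _; rewrite path_map; apply: eq_path => a b; rewrite /= g_adj.
Qed.

Lemma emb_subgraph (S : {set vert G}) (E : rel (vert G)) (gS : forall x, g x \in S) :
  (forall x y, adj H x y -> E (g x) (g y)) ->
  isometric_emb (fun x => exist (fun v => v \in S) (g x) (gS x) : vert (subgraph S E)).
Proof.
case: gI => g_inj g_adj g_short gE; split=> [x y /(congr1 val) /g_inj // | x y | x y n w].
  by apply/idP/andP => [xy | [_]]; rewrite -g_adj //; split=> //; apply: gE.
by apply: g_short; apply: (walk_map (f := val)) w => a b /andP [].
Qed.

Variable x0 : vert H.

Definition emb_inv v := odflt x0 [pick x | g x == v].

Lemma emb_invK : cancel g emb_inv.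
Proof.
move=> x; rewrite /emb_inv; case: pickP => [y /eqP | /(_ x)]; last by rewrite eqxx.
by case: gI => g_inj _ _ /g_inj.
Qed.

Lemma emb_invE v : v \in codom g -> g (emb_inv v) = v.
Proof. by case/codomP=> x ->; rewrite emb_invK. Qed.

Lemma map_emb_inv s : all (mem (codom g)) s -> map g (map emb_inv s) = s.
Proof. by move/allP=> s_g; rewrite -map_comp map_id_in // => v /s_g /emb_invE. Qed.

Lemma acyclic_codom c : acyclic H -> uniq c -> 3 <= size c -> all (mem (codom g)) c ->
  ~~ cycle (adj G) c.
Proof.
move=> acH uc c3 /map_emb_inv c_g; rewrite -c_g emb_cycle.
by apply: acH; rewrite -?(size_map g) ?c_g //; apply: (@map_uniq _ _ g); rewrite c_g.
Qed.

End Embedding.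

Lemma dist_emb_le (H K G : graph) (gH : vert H -> vert G) (gK : vert K -> vert G) x1 y1 x2 y2 :
  connected H -> isometric_emb gH -> isometric_emb gK ->
  gH x1 = gK x2 -> gH y1 = gK y2 -> dist (adj K) x2 y2 <= dist (adj H) x1 y1.
Proof.
move=> cH gHI [_ _ gK_short] ex ey; have [n /dist_walk w] := cH x1 y1.
have /gK_short [m le_m /dist_min le_dm] : walk (adj G) (gK x2) (gK y2) (dist (adj H) x1 y1).
  by rewrite -ex -ey; apply: emb_walk.
exact: leq_trans le_dm le_m.
Qed.

Lemma is_dist_transfer (A B : finType) (eA : rel A) (eB : rel B) a b a' b' :
  (forall n, walk eA a b n -> walk eB a' b' n) ->
  (forall n, walk eB a' b' n -> exists2 m, m <= n & walk eA a b m) ->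
  forall dd, is_dist eA a b dd <-> is_dist eB a' b' dd.
Proof.
move=> fw bw [n|] /=; split.
- case=> w n_min; split; first exact: fw.
  by move=> m /bw [m' le_m' /n_min n_m']; apply: leq_trans n_m' le_m'.
- case=> /bw [m le_mn w] n_min; have /n_min le_nm := fw _ w.
  have em : m = n by apply/eqP; rewrite eqn_leq le_mn le_nm.
  by rewrite -em; split=> // k /fw; rewrite em; apply: n_min.
- by move=> noA m /bw [m' _ /noA].
- by move=> noB m /fw /noB.
Qed.

Lemma isometric_sub_of_emb (H G : graph) (g : vert H -> vert G) :
  simple H -> isometric_emb g -> isometric_sub H G.
Proof.
move=> [H_sym H_irr] gI; case: (gI) => g_inj g_adj g_short.
pose S := [set v in codom g].
pose E : rel (vert G) := fun a b => [exists x, exists y, [&& g x == a, g y == b & adj H x y]].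
have gS x : g x \in S by rewrite inE codom_f.
pose f x : vert (subgraph S E) := exist (fun v => v \in S) (g x) (gS x).
have Eg x y : E (g x) (g y) = adj H x y.
  apply/existsP/idP=> [[x' /existsP [y' /and3P [/eqP/g_inj -> /eqP/g_inj -> //]]] | xy].
  by exists x; apply/existsP; exists y; rewrite !eqxx xy.
have f_adj x y : adj (subgraph S E) (f x) (f y) = adj H x y by rewrite /= Eg -g_adj andbb.
have f_inj : injective f by move=> x y /(congr1 val) /g_inj.
have [fi fK fiK] : bijective f.
  apply: (inj_card_bij f_inj); rewrite card_sig -(card_codom g_inj).
  by apply/eq_leq/eq_card => v; rewrite inE.
have fi_adj a b : adj (subgraph S E) a b = adj H (fi a) (fi b) by rewrite -f_adj !fiK.
exists S, E; split; last split.
- by split=> [a b | a]; rewrite !fi_adj; [apply: H_sym | apply: H_irr].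
- by exists f; split=> [| x y]; [apply: Bijective fK fiK | rewrite f_adj].
move=> a b dd; rewrite -(fiK a) -(fiK b); apply: is_dist_transfer => n.
  move=> w; apply: (emb_walk gI); rewrite -[fi a]fK -[fi b]fK.
  by apply: (walk_map (f := fi)) w => ? ?; rewrite fi_adj.
case/g_short=> m le_m w; exists m => //.
by apply: (walk_map (f := f)) w => ? ?; rewrite f_adj.
Qed.

Lemma isometric_emb_of_sub (H G : graph) :
  simple G -> isometric_sub H G -> exists g : vert H -> vert G, isometric_emb g.
Proof.
move=> [_ G_irr] [S [E [_ [[f [[fi fK fiK] f_adj]] f_dist]]]].
exists (fun x => val (f x)).
have back x y n : walk (adj (subgraph S E)) (f x) (f y) n -> walk (adj H) x y n.
  by rewrite -{2}[x]fK -{2}[y]fK; apply: walk_map => a b; rewrite f_adj !fiK.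
split.
- by move=> x y /val_inj /(can_inj fK).
- move=> x y; apply/idP/idP => [| xy]; first by rewrite f_adj => /andP [].
  have d1 : is_dist (adj G) (val (f x)) (val (f y)) (Some 1).
    split=> [| [|//] /walk0 exy]; first exact: walk_edge.
    by rewrite exy G_irr in xy.
  by case/f_dist: d1 => /walk1; rewrite f_adj.
- move=> x y n w; exists (dist (adj G) (val (f x)) (val (f y))); first exact: dist_min.
  apply/back/(proj1 (proj2 (f_dist _ _ (Some _)) _)).
  by split=> [| m]; [apply: dist_walk w | apply: dist_min].
Qed.

Definition partial_isometry (H K : graph) (D : {set vert H}) (f : vert H -> vert K) :=
  {in D &, forall a b, dist (adj K) (f a) (f b) = dist (adj H) a b}.

Section Glue.
Variables (T1 T2 : graph) (J : {set vert T2}) (h : vert T2 -> vert T1).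
Hypotheses (t1 : tree T1) (t2 : tree T2) (hJ : partial_isometry J h).
Local Notation d1 := (dist (adj T1)).
Local Notation d2 := (dist (adj T2)).

(* [T1] and [T2] glued by identifying each [c] in [J] with [h c]. *)
Definition glue_vert := (vert T1 + {x : vert T2 | x \notin J})%type.

Definition glue_adj : rel glue_vert := fun a b =>
  match a, b with
  | inl x, inl y => adj T1 x y
  | inl x, inr y => [exists c in J, (h c == x) && adj T2 c (sval y)]
  | inr x, inl y => [exists c in J, (h c == y) && adj T2 (sval x) c]
  | inr x, inr y => adj T2 (sval x) (sval y)
  end.

Definition glue := Graph glue_adj.

Lemma glue_simple : simple glue.
Proof.
split=> [[x|x] [y|y] | [x|x]] /=; rewrite ?(tree_irr t1) ?(tree_irr t2) //.
- exact: tree_sym.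
- by apply: eq_existsb => c; rewrite (tree_sym t2 c).
- by apply: eq_existsb => c; rewrite (tree_sym t2 c).
- exact: tree_sym.
Qed.

Lemma h_inj : {in J &, injective h}.
Proof. by move=> a b aJ bJ hab; apply: (dist_eq0 t2); rewrite -hJ // hab distxx. Qed.

Lemma h_adj : {in J &, forall a b, adj T1 (h a) (h b) = adj T2 a b}.
Proof.
move=> a b aJ bJ; apply/idP/idP => [/(dist_adj t1) | /(dist_adj t2)].
  by rewrite hJ // => /(dist1_adj t2).
by rewrite -hJ // => /(dist1_adj t1).
Qed.

Lemma walk_from_inl x v k : walk glue_adj (inl x) v k ->
  match v return Prop with
  | inl a => d1 x a <= k
  | inr b => exists2 c, c \in J & d1 x (h c) + d2 c (sval b) <= k
  end.
Proof.
elim: k v => [v /walk0 <- | k IH v /walkSr [v' /IH reach_v' v'v]]; first by rewrite distxx.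
case: v' reach_v' v'v => [a' | b'] reach_v'; case: v => [a | b] /= v'v.
- by have := dist_tri t1 x a' a; rewrite (dist_adj t1 v'v); lia.
- case/existsP: v'v => c /and3P [cJ /eqP hc cb]; subst a'; exists c => //.
  by rewrite (dist_adj t2 cb); lia.
- case/existsP: v'v => c' /and3P [c'J /eqP hc' b'c']; subst a; case: reach_v' => c cJ.
  have := dist_tri t1 x (h c) (h c'); have := dist_tri t2 c (sval b') c'.
  by rewrite hJ // (dist_adj t2 b'c'); lia.
- case: reach_v' => c cJ le_k; exists c => //.
  by have := dist_tri t2 c (sval b') (sval b); rewrite (dist_adj t2 v'v); lia.
Qed.

Lemma glue_emb1 : isometric_emb (inl : vert T1 -> vert glue).
Proof.
split=> [x y [] // | // | x y n /walk_from_inl le_n].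
by exists (d1 x y) => //; apply: walk_dist.
Qed.

Definition glue_of2 (x : vert T2) : glue_vert :=
  if insub x is Some y then inr y else inl (h x).

Variant glue_of2_spec x : glue_vert -> Type :=
  | GlueOf2In of x \in J : glue_of2_spec x (inl (h x))
  | GlueOf2Out (xJ : x \notin J) : glue_of2_spec x (inr (exist _ x xJ)).

Lemma glue_of2P x : glue_of2_spec x (glue_of2 x).
Proof.
rewrite /glue_of2; case: insubP => [[x' x'J] _ /= <- | /negbNE xJ].
  exact: GlueOf2Out.
exact: GlueOf2In.
Qed.

Lemma walk_from_glue_of2 x v k : walk glue_adj (glue_of2 x) v k ->
  match v return Prop with
  | inl a => exists2 c, c \in J & d2 x c + d1 (h c) a <= k
  | inr b => d2 x (sval b) <= k
  end.
Proof.
elim: k v => [v /walk0 <- | k IH v /walkSr [v' /IH reach_v' v'v]].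
  by case: glue_of2P => [xJ | xJ] /=; [exists x; rewrite ?distxx | rewrite distxx].
case: v' reach_v' v'v => [a' | b'] reach_v'; case: v => [a | b] /= v'v.
- case: reach_v' => c cJ le_k; exists c => //.
  by have := dist_tri t1 (h c) a' a; rewrite (dist_adj t1 v'v); lia.
- case/existsP: v'v => c' /and3P [c'J /eqP hc' c'b]; subst a'; case: reach_v' => c cJ.
  have := dist_tri t2 x c' (sval b); have := dist_tri t2 x c c'.
  by rewrite hJ // (dist_adj t2 c'b); lia.
- case/existsP: v'v => c /and3P [cJ /eqP hc b'c]; subst a; exists c; rewrite ?distxx //.
  by have := dist_tri t2 x (sval b') c; rewrite (dist_adj t2 b'c); lia.
- by have := dist_tri t2 x (sval b') (sval b); rewrite (dist_adj t2 v'v); lia.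
Qed.

Lemma glue_emb2 : isometric_emb (glue_of2 : vert T2 -> vert glue).
Proof.
split=> [x y | x y | x y n /walk_from_glue_of2 reach].
- case: glue_of2P => [xJ | xJ]; case: glue_of2P => [yJ | yJ] //.
    by case; apply: h_inj.
  by case.
- case: glue_of2P => [xJ | xJ]; case: glue_of2P => [yJ | yJ] /=.
  + by rewrite h_adj.
  + apply/idP/existsP => [xy | [c /and3P [cJ /eqP/h_inj -> //]]].
    by exists x; rewrite xJ eqxx.
  + apply/idP/existsP => [xy | [c /and3P [cJ /eqP/h_inj -> //]]].
    by exists y; rewrite yJ eqxx.
  + by [].
exists (d2 x y); last exact: walk_dist.
move: reach; case: glue_of2P => [yJ [c cJ] | //].
by rewrite hJ //; have := dist_tri t2 x c y; lia.
Qed.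

Lemma card_glue : #|vert glue| = #|vert T1| + (#|vert T2| - #|J|).
Proof.
rewrite /= card_sum card_sig -(cardsC J) addKn; congr (_ + _).
by apply: eq_card => x; rewrite !inE.
Qed.

End Glue.

Lemma glue_universal (T1 T2 : graph) (J : {set vert T2}) (h : vert T2 -> vert T1) :
  tree T1 -> tree T2 -> partial_isometry J h ->
  exists W : graph, [/\ simple W, iso_universal2 T1 T2 W &
                       #|vert W| = #|vert T1| + (#|vert T2| - #|J|)].
Proof.
move=> t1 t2 hJ; exists (glue J h); split.
- exact: glue_simple.
- split; apply: isometric_sub_of_emb;
    by [case: t1 | apply: glue_emb1 | case: t2 | apply: glue_emb2].
- exact: card_glue.
Qed.

Lemma split_excursion (T : eqType) (P : pred T) x q : P x -> P (last x q) -> has (predC P) q ->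
  exists q1 y q2 z q3, [/\ q = q1 ++ y :: q2 ++ z :: q3, ~~ P y, all (predC P) q2,
                          P z & P (last x q1)].
Proof.
elim: q x => //= a q IH x Px Pl; have [Pa | nPa] := boolP (P a) => /= has_q.
  have [q1 [y [q2 [z [q3 [-> ? ? ? ?]]]]]] := IH a Pa Pl has_q.
  by exists (a :: q1), y, q2, z, q3.
have /split_find [z s1 s2 Pz s1P] : has P q.
  case: q Pl {IH has_q} => [/= Px' | b q Pl]; first by rewrite Px' in nPa.
  by apply/hasP; exists (last b q); rewrite ?mem_last.
exists [::], a, s1, z, s2; split=> //; first by rewrite cat_rcons.
by apply/allP => t ts1 /=; apply: contraNN s1P => Pt; apply/hasP; exists t.
Qed.

Section Universal.
Variables T1 T2 U : graph.
Hypotheses (t1 : tree T1) (t2 : tree T2) (sU : simple U).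
Hypotheses (minU : minimum_universal2 T1 T2 U) (minlU : minimal_universal2 T1 T2 U).
Variables (g1 : vert T1 -> vert U) (g2 : vert T2 -> vert U) (x01 : vert T1) (x02 : vert T2).
Hypotheses (g1I : isometric_emb g1) (g2I : isometric_emb g2).
Local Notation d1 := (dist (adj T1)).
Local Notation d2 := (dist (adj T2)).
Local Notation A := (codom g1).
Local Notation B := (codom g2).

Definition AB : {set vert U} := [set v | (v \in A) || (v \in B)].

Definition AB_rel : rel (vert U) :=
  fun a b => (a \in A) && (b \in A) || (a \in B) && (b \in B).

Lemma AB_simple : simple (subgraph AB AB_rel).
Proof.
case: sU => U_sym U_irr; split=> [a b | a] /=; last by rewrite U_irr andbF.
by rewrite U_sym /AB_rel (andbC (sval a \in A)) (andbC (sval a \in B)).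
Qed.

Lemma AB_universal : iso_universal2 T1 T2 (subgraph AB AB_rel).
Proof.
have g1S x : g1 x \in AB by rewrite inE codom_f.
have g2S x : g2 x \in AB by rewrite inE codom_f orbT.
split; apply: isometric_sub_of_emb; try by [case: t1 | case: t2].
  by apply: (emb_subgraph g1I g1S) => x y _; rewrite /AB_rel !codom_f.
by apply: (emb_subgraph g2I g2S) => x y _; rewrite /AB_rel !codom_f orbT.
Qed.

Lemma AB_not_proper : ~ Defs.proper_sub AB AB_rel.
Proof. by move/(proj2 minlU _ _ AB_simple); apply; apply: AB_universal. Qed.

Lemma cover_vertex v : (v \in A) || (v \in B).
Proof.
have [ABT | ] := eqVneq AB setT; last by move=> ?; case: AB_not_proper; left.
by have := in_setT v; rewrite -ABT inE.
Qed.

Lemma cover_edge a b : adj U a b -> (a \in A) && (b \in A) || (a \in B) && (b \in B).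
Proof.
move=> ab; apply/negPn/negP => nab; apply: AB_not_proper; right.
by exists a, b; rewrite ab nab.
Qed.

Definition J : {set vert T2} := [set x | g2 x \in A].

Definition h x := emb_inv g1 x01 (g2 x).

Lemma g1_h x : x \in J -> g1 (h x) = g2 x.
Proof. by rewrite inE => /(emb_invE g1I x01). Qed.

Lemma h_isometric : partial_isometry J h.
Proof.
move=> a b aJ bJ; apply/eqP; rewrite eqn_leq.
rewrite (dist_emb_le (tree_connected t2) g2I g1I (esym (g1_h aJ)) (esym (g1_h bJ))).
by rewrite (dist_emb_le (tree_connected t1) g1I g2I (g1_h aJ) (g1_h bJ)).
Qed.

Lemma card_U : #|vert T1| + #|vert T2| - #|J| <= #|vert U|.
Proof.
case: g1I g2I => g1_inj _ _ [g2_inj _ _].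
have AB_J : #|[predI A & B]| = #|J|.
  rewrite -(card_imset J g2_inj); apply: eq_card => v; rewrite !inE.
  apply/andP/imsetP => [[vA /codomP [x ev]] | [x xJ ->]].
    by exists x; rewrite // inE -ev.
  by rewrite inE in xJ; rewrite xJ codom_f.
by rewrite -(card_codom g1_inj) -(card_codom g2_inj) -AB_J -cardUI addnK max_card.
Qed.

(* Gluing [T1] and [T2] along a larger partial isometry would give a smaller universal graph. *)
Lemma J_max (D : {set vert T2}) (f : vert T2 -> vert T1) : partial_isometry D f -> #|D| <= #|J|.
Proof.
move=> Df; have [W [sW uW cW]] := glue_universal t1 t2 Df.
have := proj2 minU W sW uW; rewrite cW.
by have := card_U; have := max_card D; have := max_card J; lia.
Qed.

Lemma J_nonempty : exists u, u \in J.
Proof.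
have [J0 | [u uJ]] := set_0Vmem J; last by exists u.
suff : #|[set x02]| <= #|J| by rewrite J0 cards1 cards0.
by apply: (@J_max _ (fun _ => x01)) => a b /set1P -> /set1P ->; rewrite !distxx.
Qed.

Lemma U_connected : connected U.
Proof.
have [u0 u0J] := J_nonempty.
suff to_u0 v : exists n, walk (adj U) v (g2 u0) n.
  move=> v w; have [m vu] := to_u0 v; have [n wu] := to_u0 w.
  by exists (m + n); apply: walk_cat vu (walk_rev _ wu); case: sU.
case/orP: (cover_vertex v) => /codomP [x ->].
  have [n xu] := tree_connected t1 x (h u0).
  by exists n; rewrite -g1_h //; apply: emb_walk xu.
by have [n xu] := tree_connected t2 x u0; exists n; apply: emb_walk xu.
Qed.

(* [J] is geodesically convex in [T2]: otherwise the step from [h u] toward [h w] in [T1]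
   would extend [h] isometrically beyond [J]. *)
Lemma J_step_toward u w y : u \in J -> w \in J -> u != w -> adj T2 u y ->
  (d2 y w).+1 = d2 u w -> y \in J.
Proof.
move=> uJ wJ uw uy yw; apply: contraT => yJ.
have huw : h u != h w.
  by apply: contra_neq uw => e_uw; apply: (dist_eq0 t2); rewrite -h_isometric // e_uw distxx.
have [y1 uy1 y1w] := step_toward t1 huw.
have y1_h b : b \in J -> d1 y1 (h b) = d2 y b.
  move=> bJ; rewrite (dist_step_toward t1 _ uy1 y1w) (dist_step_toward t2 _ uy yw).
  by rewrite !h_isometric.
have J_neq b : b \in J -> (b == y) = false by move=> bJ; apply: contraNF yJ => /eqP <-.
pose h' b := if b == y then y1 else h b.
have : #|y |: J| <= #|J|.
  apply: (@J_max _ h') => a b; rewrite !in_setU1 /h'.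
  case/predU1P=> [-> | aJ]; case/predU1P=> [-> | bJ]; rewrite ?eqxx ?J_neq //.
  - by rewrite !distxx.
  - exact: y1_h.
  - by rewrite (dist_sym t1) y1_h // (dist_sym t2).
  - exact: h_isometric.
by rewrite cardsU1 yJ ltnn.
Qed.

Lemma excursion_in_B u y q z : all [predC A] (y :: q) ->
  path (adj U) u (y :: rcons q z) -> all (mem B) (u :: y :: rcons q z).
Proof.
move=> yqA; rewrite -rcons_cons rcons_path => /andP [p_uq lz].
have yA : y \notin A by case/andP: yqA.
have yqB : all (mem B) (y :: q).
  by apply/allP => v /(allP yqA) vA; move: (cover_vertex v); rewrite (negbTE vA).
have zB : z \in B.
  have /(allP yqA) lA := mem_last y q.
  by move: (cover_edge lz); rewrite /= (negbTE lA) /= => /andP [].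
have uB : u \in B.
  by move: p_uq => /= /andP [/cover_edge]; rewrite (negbTE yA) andbF /= => /andP [].
apply/allP => v; rewrite -rcons_cons mem_rcons 2!in_cons.
by case/or3P => [/eqP -> | /eqP -> | /(allP yqB)].
Qed.

Lemma no_excursion u y q z : u \in A -> all [predC A] (y :: q) -> z \in A ->
  path (adj U) u (y :: rcons q z) -> u \notin y :: rcons q z -> False.
Proof.
move=> uA yqA zA p_uz u_out.
have /andP [uB sB] : (u \in B) && all (mem B) (y :: rcons q z) := excursion_in_B yqA p_uz.
set s := y :: rcons q z in u_out sB.
pose inv2 := emb_inv g2 x02; pose u2 := inv2 u; pose s2 := map inv2 s.
have gu2 : g2 u2 = u := emb_invE g2I x02 uB.
have gs2 : map g2 s2 = s := map_emb_inv g2I x02 sB.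
have p2 : path (adj T2) u2 s2 by rewrite -(emb_path g2I) gu2 gs2.
have u2_out : u2 \notin s2 by apply: contra u_out => /(map_f g2); rewrite gu2 gs2.
move: p2 u2_out; rewrite /s2 /s /= inE negb_or => /andP [uy2 p2] /andP [u2y2 u2_out].
set y2 := inv2 y in uy2 p2 u2y2; set w2 := inv2 z.
have lw2 : last y2 (map inv2 (rcons q z)) = w2 by rewrite last_map last_rcons.
have y2u2 : y2 != u2 by rewrite eq_sym.
have w2y := path_walk (path_avoiding p2 y2u2 u2_out); rewrite lw2 in w2y.
have uw2 : u2 != w2.
  by apply: contraNneq u2_out => ->; apply: map_f; rewrite mem_rcons mem_head.
have yB : y \in B by apply: (allP sB); rewrite mem_head.
have zB : z \in B by apply: (allP sB); rewrite inE mem_rcons mem_head orbT.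
have u2J : u2 \in J by rewrite inE gu2.
have w2J : w2 \in J by rewrite inE (emb_invE g2I x02 zB).
have := J_step_toward u2J w2J uw2 uy2 (step_toward_avoiding t2 uy2 uw2 w2y).
by rewrite inE (emb_invE g2I x02 yB); case/andP: yqA => /negbTE ->.
Qed.

(* A vertex [a] outside [B] has both cycle neighbours in [A], so the excursions of the
   cycle outside [A] start and end at two distinct vertices. *)
Lemma cycle_excursion c a v : uniq c -> cycle (adj U) c -> a \in c -> a \notin B ->
  v \in c -> v \notin A ->
  exists u y q z, [/\ u \in A, all [predC A] (y :: q), z \in A,
                     path (adj U) u (y :: rcons q z) & u \notin y :: rcons q z].
Proof.
move=> uc cc ac aB vc vA.
have aA : a \in A by move: (cover_vertex a); rewrite (negbTE aB) orbF.
case: (rot_to ac) => i s rot_c.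
have uas : uniq (a :: s) by rewrite -rot_c rot_uniq.
have /andP [ps lsa] : path (adj U) a s && adj U (last a s) a.
  by rewrite -rcons_path -[path _ _ _]/(cycle _ (a :: s)) -rot_c rot_cycle.
have lsA : last a s \in A.
  by move: (cover_edge lsa); rewrite (negbTE aB) andbF orbF => /andP [].
have has_s : has [predC A] s.
  have : v \in a :: s by rewrite -rot_c mem_rot.
  by rewrite inE => /predU1P [va | vs]; [rewrite va aA in vA | apply/hasP; exists v].
have [q1 [y [q [z [q3 [es yA qA zA uA]]]]]] := split_excursion aA lsA has_s.
exists (last a q1), y, q, z; split=> //; first by rewrite /= yA.
  by move: ps; rewrite es cat_path -cat_rcons -cat_cons cat_path => /and3P [].
move: uas; rewrite es -cat_cons cat_uniq => /and3P [_ disj _].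
apply: contra disj => u_in; apply/hasP; exists (last a q1); last exact: mem_last.
by move: u_in; rewrite -cat_rcons -cat_cons mem_cat => ->.
Qed.

Lemma U_acyclic : acyclic U.
Proof.
move=> c uc c3; apply/negP => cc.
have [cA | /allPn [v vc vA]] := boolP (all (mem A) c).
  by move: cc; apply/negP/(acyclic_codom g1I x01 (tree_acyclic t1)).
have [cB | /allPn [a ac aB]] := boolP (all (mem B) c).
  by move: cc; apply/negP/(acyclic_codom g2I x02 (tree_acyclic t2)).
have [u [y [q [z [uA yqA zA p_uz u_out]]]]] := cycle_excursion uc cc ac aB vc vA.
exact: no_excursion uA yqA zA p_uz u_out.
Qed.

End Universal.

Unset Implicit Arguments.

Theorem theorem2 (T1 T2 U : graph) :
  tree T1 -> tree T2 -> simple U ->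
  minimum_universal2 T1 T2 U -> minimal_universal2 T1 T2 U ->
  tree U.
Proof.
move=> t1 t2 sU minU minlU.
have [[/(isometric_emb_of_sub sU) [g1 g1I] /(isometric_emb_of_sub sU) [g2 g2I]] _] := minU.
have [x01 _] : exists x : vert T1, x \in vert T1 by apply/card_gt0P; case: t1 => _ [].
have [x02 _] : exists x : vert T2, x \in vert T2 by apply/card_gt0P; case: t2 => _ [].
split; first exact: sU.
split; first by apply/card_gt0P; exists (g1 x01).
split; first exact: (U_connected t1 t2 sU minU minlU x01 x02 g1I g2I).
exact: (U_acyclic t1 t2 sU minU minlU x01 x02 g1I g2I).
Qed.
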